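(* For every integer $F\ge 2$, $s(F,F,1)=\dfrac{F(F-1)}{2}$.
   Context: A placement delivery array $S$-PDA$(F,K,Z)$ is an $F\times K$ array $R=(r_{j,k})$, $1\le j\le F$, $1\le k\le K$, over a finite set $S$ such that: (1) each cell is either empty or contains an element of $S$; (2) each column contains exactly $Z$ empty cells; (3) each element of $S$ occurs at most once in each row and at most once in each column; (4) if two distinct nonempty cells satisfy $r_{j_1,k_1}=r_{j_2,k_2}=t\in S$, then the cells $r_{j_1,k_2}$ and $r_{j_2,k_1}$ are empty. For integers $F,K\ge1$, $0\le Z\le F$, define $s(F,K,Z)=\min\{|S| : \text{there exists an } S\text{-PDA}(F,K,Z)\}$. *)

From mathcomp Require Import all_boot.
Set Implicit Arguments. Unset Strict Implicit. Unset Printing Implicit Defensive.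

(* An F x K array over S: each cell is either empty (None) or holds Some t. *)
Definition array (S : finType) (F K : nat) := 'I_F -> 'I_K -> option S.

Definition is_PDA (S : finType) (F K Z : nat) (R : array S F K) : Prop :=
  (forall k : 'I_K, #|[set j : 'I_F | R j k == None]| = Z) /\
  (forall (j : 'I_F) (k1 k2 : 'I_K) (t : S),
      R j k1 = Some t -> R j k2 = Some t -> k1 = k2) /\
  (forall (j1 j2 : 'I_F) (k : 'I_K) (t : S),
      R j1 k = Some t -> R j2 k = Some t -> j1 = j2) /\
  (forall (j1 j2 : 'I_F) (k1 k2 : 'I_K) (t : S),
      (j1, k1) <> (j2, k2) -> R j1 k1 = Some t -> R j2 k2 = Some t ->
      R j1 k2 = None /\ R j2 k1 = None).

Definition is_s_value (F K Z N : nat) : Prop :=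
  (exists (S : finType) (R : array S F K), @is_PDA S F K Z R /\ #|S| = N) /\
  (forall (S : finType) (R : array S F K), @is_PDA S F K Z R -> N <= #|S|).

(* In an S-PDA(F, K, Z) the K(F-Z) filled cells are covered by the elements
   of S, each at most Z+1 times: the occurrences of t lie in distinct rows,
   and if t sits at (j0, k0) then condition (4) empties (j, k0) for every
   other occurrence (j, k).  With K = F and Z = 1 this gives F(F-1) <= 2|S|.
   Conversely, writing the 2-subset {j, k} in every off-diagonal cell (j, k)
   gives a PDA(F, F, 1) over the F(F-1)/2 two-element subsets of the rows. *)

From mathcomp Require Import all_boot.

Set Implicit Arguments.
Unset Strict Implicit.
Unset Printing Implicit Defensive.

Section Counting.

Variables (S : finType) (F K : nat) (R : array S F K).

Definition occurrences (t : S) : {set 'I_F * 'I_K} :=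
  [set p | R p.1 p.2 == Some t].

Definition filled_cells : {set 'I_F * 'I_K} := [set p | R p.1 p.2 != None].

Lemma sum_card_occurrences : \sum_t #|occurrences t| = #|filled_cells|.
Proof.
rewrite -sum1_card [RHS]big_mkcond /=.
under eq_bigr => t _ do rewrite -sum1_card big_mkcond /=.
rewrite exchange_big /=; apply: eq_bigr => p _.
under eq_bigr => t _ do rewrite inE.
rewrite inE; case: (R p.1 p.2) => [s|] /=; last by rewrite big1.
rewrite (bigD1 s) //= eqxx big1 // => t ts.
by case: eqP => // -[st]; rewrite st eqxx in ts.
Qed.

Lemma card_filled_cells (Z : nat) :
  (forall k, #|[set j | R j k == None]| = Z) -> #|filled_cells| = K * (F - Z).
Proof.
move=> colZ; rewrite -[LHS]sum1_card big_mkcond /=.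
under eq_bigr => p _ do rewrite inE.
rewrite -(pair_bigA _ (fun j k => if R j k != None then 1 else 0)) /=.
rewrite exchange_big /= -[in RHS](card_ord K) -sum_nat_const.
apply: eq_bigr => k _.
rewrite -(colZ k) -[F in F - _](card_ord F) -(cardsC [set j | R j k == None]).
rewrite addKn -sum1_card [RHS]big_mkcond /=; apply: eq_bigr => j _.
by rewrite !inE; case: (R j k).
Qed.

Lemma card_occurrences_le (Z : nat) (t : S) :
  is_PDA Z R -> #|occurrences t| <= Z.+1.
Proof.
move=> [colZ [row_uniq [_ empty_cross]]].
have [->|[p0 p0t]] := set_0Vmem (occurrences t); first by rewrite cards0.
rewrite (cardsD1 p0) p0t add1n ltnS -(colZ p0.2).
have row_inj : {in occurrences t :\ p0 &, injective fst}.
  move=> [j k1] [j' k2]; rewrite !inE /= => /andP[_ /eqP e1] /andP[_ /eqP e2].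
  by move=> /= jj; subst j'; rewrite (row_uniq _ _ _ _ e1 e2).
rewrite -(card_in_imset row_inj); apply/subset_leq_card/subsetP.
move=> _ /imsetP[[j k] + ->]; rewrite !inE /= => /andP[/eqP ne /eqP e].
move: p0t; rewrite inE => /eqP e0.
by rewrite (empty_cross j p0.1 k p0.2 t _ e e0).1 // -surjective_pairing.
Qed.

Lemma PDA_card_lower (Z : nat) : is_PDA Z R -> K * (F - Z) <= Z.+1 * #|S|.
Proof.
move=> pda; have [colZ _] := pda.
rewrite -(card_filled_cells colZ) -sum_card_occurrences mulnC -sum_nat_const.
by apply: leq_sum => t _; apply: card_occurrences_le.
Qed.

End Counting.

Lemma PDA_FF1_card_lower (S : finType) (F : nat) (R : array S F F) :
  is_PDA 1 R -> F * (F - 1) %/ 2 <= #|S|.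
Proof.
move=> /PDA_card_lower le2.
by rewrite -(mulKn #|S| (isT : 0 < 2)) leq_div2r.
Qed.

Section PairArray.

Variable F : nat.

Definition pairs_of := {A : {set 'I_F} | #|A| == 2}.

Definition pair_array : array pairs_of F F := fun j k => insub [set j; k].

Lemma card_pairs_of : #|{: pairs_of}| = F * (F - 1) %/ 2.
Proof.
rewrite card_sig -[X in X = _](@eq_card _ [set A : {set 'I_F} | #|A| == 2]).
  by rewrite card_draws card_ord bin2 divn2 subn1.
by move=> A; rewrite !inE.
Qed.

Lemma pair_array_None (j k : 'I_F) : (pair_array j k == None) = (j == k).
Proof.
rewrite /pair_array; case: (eqVneq j k) => [->|ne]; case: insubP => [u|] //=;
  by rewrite cards2 ?eqxx ?ne.
Qed.

Lemma pair_array_Some (j k : 'I_F) t :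
  pair_array j k = Some t -> val t = [set j; k] /\ j != k.
Proof.
rewrite /pair_array; case: insubP => [u|] //; rewrite cards2 => jk <- [<-].
by split; last by case: (j != k) jk.
Qed.

Lemma pair_array_same_entry (j1 k1 j2 k2 : 'I_F) t :
  pair_array j1 k1 = Some t -> pair_array j2 k2 = Some t ->
  j1 != k1 /\ ((j2, k2) = (j1, k1) \/ (j2, k2) = (k1, j1)).
Proof.
move=> /pair_array_Some[e1 ne1] /pair_array_Some[e2 ne2]; split=> //; move: ne2.
have : j2 \in [set j1; k1] by rewrite -e1 e2 !inE eqxx.
have : k2 \in [set j1; k1] by rewrite -e1 e2 !inE eqxx orbT.
rewrite !inE => /orP[]/eqP-> /orP[]/eqP->; rewrite ?eqxx //= => _; by [left|right].
Qed.

Lemma pair_array_PDA : is_PDA 1 pair_array.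
Proof.
split; [|split; [|split]].
- move=> k; rewrite (_ : [set j | _] = [set k]) ?cards1 //.
  by apply/setP=> j; rewrite !inE pair_array_None.
- move=> j k1 k2 t e1 e2.
  case: (pair_array_same_entry e1 e2) => ne [[->]|[jk _]] //.
  by rewrite jk eqxx in ne.
- move=> j1 j2 k t e1 e2.
  case: (pair_array_same_entry e1 e2) => ne [[->]|[_ kj]] //.
  by rewrite kj eqxx in ne.
- move=> j1 j2 k1 k2 t ne12 e1 e2.
  case: (pair_array_same_entry e1 e2) => _ [E|[-> ->]]; first by case: ne12.
  by split; apply/eqP; rewrite pair_array_None.
Qed.

End PairArray.

Theorem mainTheorem5 (F : nat) : 2 <= F -> is_s_value F F 1 (F * (F - 1) %/ 2).
Proof.
move=> _; split.
- by exists (pairs_of F), (@pair_array F); split;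
    [exact: pair_array_PDA | exact: card_pairs_of].
- by move=> S R; exact: PDA_FF1_card_lower.
Qed.
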